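(* Let $(\mathcal X,d)$ be a metric space with $d(x,y)\le1$ for all $x,y\in\mathcal X$, let $f:[n]\to\mathcal X$ be a feature, $1\le k\le n$, and $\mu=\mathbb E_{S\sim\mathcal U_{k,n}}[W(\phi_f^{[n]},\phi_f^S)]$. Then for every $t>0$, $$\mathbb P_{S\sim\mathcal U_{k,n}}\big[W(\phi_f^{[n]},\phi_f^S)\ge\mu+t\big]\le\exp(-t^2k/4).$$
   Context: For nonempty $S\subseteq[n]$, $\phi_f^S=\frac1{|S|}\sum_{i\in S}\delta(f(i))$, with $\delta(\cdot)$ a Dirac mass. $W(\phi,\psi)=\min_{\gamma}\mathbb E_{(x,y)\sim\gamma}[d(x,y)]$ over couplings $\gamma$ of the finitely supported distributions $\phi,\psi$ (Wasserstein-1 distance). $\mathcal U_{k,n}$ is the uniform distribution over size-$k$ subsets of $[n]$. *)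

From HB Require Import structures.
From mathcomp Require Import all_boot all_order all_algebra.
From mathcomp Require Import all_classical all_reals.
From mathcomp Require Import topology normedtype sequences exp.
Set Implicit Arguments. Unset Strict Implicit. Unset Printing Implicit Defensive.
Import Order.TTheory GRing.Theory Num.Theory.
Local Open Scope classical_set_scope.
Local Open Scope ring_scope.

Section Defs.
Variables (R : realType) (X : eqType).

(* phi_f^S = (1/|S|) sum_{i in S} delta(f i), as a finitely supported
   mass function X -> R. *)
Definition phi (n : nat) (f : 'I_n -> X) (S : {set 'I_n}) : X -> R :=
  fun x => #|[set i in S | f i == x]|%:R / #|S|%:R.

Definition is_coupling (phi psi : X -> R) (s : seq X) (g : X -> X -> R) : Prop :=
  [/\ uniq s,
      (forall x y, 0 <= g x y),
      (forall x y, g x y != 0 -> x \in s /\ y \in s),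
      (forall x, \sum_(y <- s) g x y = phi x) &
      (forall y, \sum_(x <- s) g x y = psi y)].

Definition coupling_cost (d : X -> X -> R) (s : seq X) (g : X -> X -> R) : R :=
  \sum_(x <- s) \sum_(y <- s) g x y * d x y.

(* Wasserstein-1 distance: optimum over all couplings (the min is attained
   for finitely supported measures, so inf = min). *)
Definition W1 (d : X -> X -> R) (phi psi : X -> R) : R :=
  inf [set c | exists s g, is_coupling phi psi s g /\ c = coupling_cost d s g].
End Defs.

Section Unif.
Variable (R : realType).
Definition ksubsets (n k : nat) : {set {set 'I_n}} := [set S : {set 'I_n} | #|S| == k].

Definition unifE (n k : nat) (F : {set 'I_n} -> R) : R :=
  (\sum_(S in ksubsets n k) F S) / #|ksubsets n k|%:R.

Definition unifP (n k : nat) (P : pred {set 'I_n}) : R :=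
  #|[set S in ksubsets n k | P S]|%:R / #|ksubsets n k|%:R.
End Unif.
Arguments unifE {R} n k F.
Arguments unifP {R} n k P.
Arguments phi {R X} n f S.

(* Uniform k-subsets are obtained by drawing one element a of the ground set
   and then a uniform (k-1)-subset of the remaining elements, so an average over
   k-subsets is an average over a of conditional averages.  If F changes by at
   most c when one element of the subset is exchanged for another, the
   conditional averages differ by at most c; a Hoeffding-type step
   (expR x <= 1 + x + x^2 for |x| <= 1/2) and induction on k then bound the
   moment generating function of F - E F by expR (k lam^2 c^2) when lam c <= 1/2,
   and the same induction bounds F - E F by k c.
   For F S = W (phi^[n], phi^S) one has c = 1/k: exchanging one element of S
   moves mass 1/k of phi^S over a distance at most 1, which changes any coupling
   at cost at most 1/k.  Chernoff's bound with lam = k t / 2 gives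
   expR (- t^2 k / 4) when t <= 1; for t > 1 the event is empty, since
   F - E F <= k c = 1. *)

From HB Require Import structures.
From mathcomp Require Import all_boot all_order all_algebra perm.
From mathcomp Require Import all_classical all_reals.
From mathcomp Require Import topology normedtype sequences exp.
From mathcomp Require Import ring lra.
(* Give finset's names (inE, setP, subsetP, set0, ...) precedence over their
   classical_sets homonyms. *)
From mathcomp Require Import fintype finset.
Import Order.TTheory GRing.Theory Num.Theory.
Local Open Scope ring_scope.

Section ExpBound.
Variable R : realType.

Lemma expR_le_inv1B {y : R} : y < 1 -> expR y <= (1 - y)^-1.
Proof.
move=> y1; rewrite -[expR y]invrK lef_pV2 ?posrE ?invr_gt0 ?expR_gt0 ?subr_gt0 //.
by rewrite -expRN; exact: expR_ge1Dx.
Qed.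

(* [expR (x / 3) <= (1 - x / 3)^-1], and [(1 + x + x ^+ 2) (1 - x / 3) ^+ 3 >= 1]
   on [-1/2, 1/2]. *)
Lemma expR_le1DxDsqr (x : R) : `|x| <= 1/2 -> expR x <= 1 + x + x ^+ 2.
Proof.
rewrite ler_norml => /andP[xlo xhi].
have -> : expR x = expR (x / 3) ^+ 3 by rewrite -expRM_natl; congr expR; field.
have y1 : x / 3 < 1 by lra.
apply: (le_trans (lerXn2r 3 _ _ (expR_le_inv1B y1)));
  rewrite ?nnegrE ?expR_ge0 ?invr_ge0 ?subr_ge0 ?(ltW y1) //.
rewrite exprVn -[(_ ^+ 3)^-1]mul1r ler_pdivrMr ?exprn_gt0 ?subr_gt0 //.
have -> : (1 + x + x ^+ 2) * (1 - x / 3) ^+ 3 =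
    1 + x ^+ 2 / 27 * (9 - 19 * x + 8 * x ^+ 2 - x ^+ 3) by field.
rewrite lerDl mulr_ge0 ?divr_ge0 ?sqr_ge0 //.
have : 0 <= x ^+ 2 * (8 - x) by rewrite mulr_ge0 ?sqr_ge0 //; lra.
rewrite !exprS expr0 !mulr1; nra.
Qed.
End ExpBound.

Section Average.
Context {R : realType} {I : finType}.
Implicit Types (A : {set I}) (F G : I -> R).

(* The junk value [x / 0 = 0] makes [avg set0 F = 0]. *)
Definition avg A F : R := (\sum_(i in A) F i) / #|A|%:R.

Lemma ler_avg A F G : {in A, forall i, F i <= G i} -> avg A F <= avg A G.
Proof. by move=> FG; rewrite ler_wpM2r ?invr_ge0 ?ler0n // ler_sum. Qed.

Lemma avgMl A c F : avg A (fun i => c * F i) = c * avg A F.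
Proof. by rewrite /avg -big_distrr mulrA. Qed.

Lemma avgMr A c F : avg A (fun i => F i * c) = avg A F * c.
Proof. by rewrite /avg -big_distrl mulrAC. Qed.

Lemma avgD A F G : avg A (F \+ G) = avg A F + avg A G.
Proof. by rewrite /avg big_split mulrDl. Qed.

Lemma avgB A F G : avg A (F \- G) = avg A F - avg A G.
Proof. by rewrite /avg big_split sumrN /= mulrBl. Qed.

Lemma avg_cst A c : (0 < #|A|)%N -> avg A (fun _ => c) = c.
Proof.
by move=> A0; rewrite /avg sumr_const -[c *+ _]mulr_natr mulfK // pnatr_eq0 -lt0n.
Qed.

Lemma avg_cst_le A c : 0 <= c -> avg A (fun _ => c) <= c.
Proof.
move=> c0; case: (posnP #|A|) => [A0|/avg_cst-> //].
by rewrite /avg A0 invr0 mulr0.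
Qed.

Lemma ler_norm_avg A F : `|avg A F| <= avg A (Num.norm \o F).
Proof.
by rewrite /avg normrM normfV normr_nat ler_wpM2r ?invr_ge0 ?ler0n // ler_norm_sum.
Qed.

Lemma avg_le_ub A F c : 0 <= c -> {in A, forall i, F i <= c} -> avg A F <= c.
Proof.
by move=> c0 Fc; exact: le_trans (ler_avg _ _ (fun=> c) Fc) (avg_cst_le _ _ c0).
Qed.

Lemma ler_dist_avg A F c : (0 < #|A|)%N -> {in A &, forall i j, `|F i - F j| <= c} ->
  {in A, forall i, `|F i - avg A F| <= c}.
Proof.
move=> A0 Fc i iA; have c0 : 0 <= c by have := Fc i i iA iA; rewrite subrr normr0.
rewrite -[F i](avg_cst _ _ A0) -avgB; apply: le_trans (ler_norm_avg _ _) _.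
by apply: avg_le_ub => // j jA; exact: Fc.
Qed.

(* Since [|lam (F i - m)| <= 1/2], [expR] is dominated by its second-order
   Taylor polynomial; the linear term averages out. *)
Lemma avg_expR_centered_le A F c lam : (0 < #|A|)%N -> 0 <= lam -> lam * c <= 1/2 ->
  {in A &, forall i j, `|F i - F j| <= c} ->
  avg A (fun i => expR (lam * (F i - avg A F))) <= expR (lam ^+ 2 * c ^+ 2).
Proof.
move=> A0 lam0 lamc Fc; set m := avg A F.
have dev i : i \in A -> `|lam * (F i - m)| <= lam * c.
  by move=> iA; rewrite normrM ger0_norm // ler_wpM2l // ler_dist_avg.
apply: (le_trans (ler_avg _ _ (fun i => 1 + lam * (F i - m) + (lam * (F i - m)) ^+ 2) _)).
  by move=> i iA; apply: expR_le1DxDsqr; exact: le_trans (dev i iA) lamc.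
rewrite 2!avgD avg_cst // avgMl avgB avg_cst // subrr mulr0 addr0.
apply: le_trans (expR_ge1Dx _); rewrite lerD2l -exprMn.
apply: avg_le_ub => [|i iA]; first exact: sqr_ge0.
by rewrite -real_normK ?num_real // ler_sqr ?nnegrE ?dev // (le_trans _ (dev i iA)).
Qed.

Lemma natr_card_sep A (P : pred I) : #|[set i in A | P i]|%:R = \sum_(i in A) (P i)%:R :> R.
Proof.
rewrite -sum1dep_card natr_sum [RHS]big_mkcond [LHS]big_mkcond /=.
by apply: eq_bigr => i _; case: (i \in A); case: (P i).
Qed.

Lemma avg_chernoff {A F} {m t lam : R} : 0 <= lam ->
  avg A (fun i => (m + t <= F i)%R%:R) <=
  avg A (fun i => expR (lam * (F i - m))) * expR (- (lam * t)).
Proof.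
move=> lam0; rewrite -avgMr; apply: ler_avg => i _ /=.
have [tF|_] := leP (m + t) (F i); last by rewrite mulr_ge0 ?expR_ge0.
rewrite -expRD -mulrN -mulrDr; apply: le_trans (expR_ge1Dx _).
by rewrite lerDl mulr_ge0 // subr_ge0 lerBrDr addrC.
Qed.
End Average.

Section Draws.
Context {R : realType} {T : finType}.
Implicit Types (U A B : {set T}) (a x y : T).

Definition draws (j : nat) U : {set {set T}} :=
  [set A : {set T} | A \subset U & #|A| == j].

Lemma draws0 U : draws 0 U = [set set0].
Proof.
apply/setP => A; rewrite !inE cards_eq0.
by rewrite andb_idl // => /eqP ->; exact: sub0set.
Qed.

Lemma notin_draws_setD1 {j U a B} : B \in draws j (U :\ a) -> a \notin B.
Proof. by rewrite inE => /andP[/subsetP BUa _]; apply/negP => /BUa; rewrite !inE eqxx. Qed.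

Lemma setU1_draws {j U a B} : a \in U -> B \in draws j (U :\ a) -> a |: B \in draws j.+1 U.
Proof.
move=> aU Bd; have aB := notin_draws_setD1 Bd.
move: Bd; rewrite !inE => /andP[BUa /eqP <-].
rewrite cardsU1 aB eqxx andbT subUset sub1set aU /=.
exact: subset_trans BUa (subsetDl _ _).
Qed.

Lemma setD1_draws {j U a A} : A \in draws j.+1 U -> a \in A -> A :\ a \in draws j (U :\ a).
Proof.
rewrite !inE => /andP[AU /eqP cA] aA.
by rewrite setSD //= -eqSS -cA (cardsD1 a A) aA.
Qed.

Lemma sum_draws_setU1 j U a (h : {set T} -> R) : a \in U ->
  \sum_(B in draws j (U :\ a)) h (a |: B) = \sum_(A in draws j.+1 U | a \in A) h A.
Proof.
move=> aU; rewrite [RHS](reindex_onto (fun B => a |: B) (fun A => A :\ a)) /=; last first.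
  by move=> A /andP[_ aA]; rewrite setD1K.
apply: eq_bigl => B; rewrite setU11 andbT.
apply/idP/idP => [BUa | /andP[BU /eqP <-]]; last by rewrite setD1_draws ?setU11.
by rewrite setU1_draws // setU1K ?eqxx // (notin_draws_setD1 BUa).
Qed.

Lemma sum_draws_pick j U (h : {set T} -> R) :
  \sum_(a in U) \sum_(B in draws j (U :\ a)) h (a |: B) =
  j.+1%:R * \sum_(A in draws j.+1 U) h A.
Proof.
rewrite (eq_bigr _ (fun a => @sum_draws_setU1 j U a h)).
rewrite (exchange_big_dep (mem (draws j.+1 U))) => [|? ? _ /andP[] //].
rewrite big_distrr; apply: eq_bigr => A Ad.
have /andP[/subsetP AU /eqP cA] : (A \subset U) && (#|A| == j.+1).
  by move: Ad; rewrite /= inE.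
rewrite (eq_bigl (mem A)) => [|i /=]; first by rewrite sumr_const cA /= mulr_natl.
by apply/idP/idP => [/and3P[]//|iA]; rewrite AU ?iA ?andbT.
Qed.

Lemma card_draws_setD1 j U a : a \in U -> #|draws j (U :\ a)| = 'C(#|U|.-1, j).
Proof. by move=> aU; rewrite cards_draws (cardsD1 a U) aU. Qed.

Lemma avg_draws_pick j U (F : {set T} -> R) :
  avg (draws j.+1 U) F = avg U (fun a => avg (draws j (U :\ a)) (fun B => F (a |: B))).
Proof.
rewrite /avg; set N := #|U|.
rewrite (eq_bigr (fun a => (\sum_(B in draws j (U :\ a)) F (a |: B)) / 'C(N.-1, j)%:R));
  last by move=> a aU; rewrite card_draws_setD1.
have NC : N%:R * 'C(N.-1, j)%:R = j.+1%:R * 'C(N, j.+1)%:R :> R.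
  by rewrite -!natrM mul_bin_diag.
rewrite -big_distrl /= sum_draws_pick cards_draws -mulrA -invfM [_ * N%:R]mulrC NC invfM.
by rewrite mulrACA divff ?mul1r // pnatr_eq0.
Qed.
End Draws.

Section Swaps.
Context {R : realType} {T : finType}.
Implicit Types (U A B : {set T}) (a x y : T).

Lemma imset_tpermK x y : involutive (fun A : {set T} => tperm x y @: A).
Proof. by move=> A; rewrite -imset_comp (eq_imset _ (tpermK x y)) imset_id. Qed.

Lemma mem_imset_tperm x y A z : (z \in tperm x y @: A) = (tperm x y z \in A).
Proof. by rewrite -{1}(tpermK x y z) mem_imset //; exact: perm_inj. Qed.

Lemma imset_tperm_out x y A : x \in A -> y \notin A -> tperm x y @: A = y |: (A :\ x).
Proof.
move=> xA yA; apply/setP => z; rewrite mem_imset_tperm !inE.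
case: tpermP => [->|->|/eqP zx /eqP zy];
  rewrite ?eqxx ?xA ?(negPf yA) ?(negPf zx) ?(negPf zy) //=.
by rewrite orbF; apply/esym/eqP => xy; rewrite -xy xA in yA.
Qed.

Lemma imset_tperm_id x y A : (x \in A) = (y \in A) -> tperm x y @: A = A.
Proof.
by move=> xyA; apply/setP => z; rewrite mem_imset_tperm; case: tpermP => [->|->|].
Qed.

Lemma tperm_draws {j U a a' B} : a \in U -> a' \in U ->
  B \in draws j (U :\ a) -> tperm a a' @: B \in draws j (U :\ a').
Proof.
move=> aU a'U; rewrite !inE => /andP[/subsetP BUa cB].
rewrite card_imset ?cB ?andbT; last exact: perm_inj.
apply/subsetP => _ /imsetP[i iB ->]; have := BUa i iB; rewrite !inE => /andP[ia iU].
case: tpermP => [eia | eia | _ ia']; first by rewrite eia eqxx in ia.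
- by rewrite aU andbT; apply: contra ia => /eqP ->; rewrite eia.
- by rewrite iU andbT; apply/eqP.
Qed.

Lemma avg_draws_tperm j U a a' (F : {set T} -> R) : a \in U -> a' \in U ->
  avg (draws j (U :\ a')) F = avg (draws j (U :\ a)) (fun B => F (tperm a a' @: B)).
Proof.
move=> aU a'U; rewrite /avg !card_draws_setD1 //.
rewrite (reindex_inj (can_inj (imset_tpermK a a'))) /=; congr (_ / _).
apply: eq_bigl => B; apply/idP/idP; last exact: tperm_draws.
by move/(tperm_draws a'U aU); rewrite tpermC imset_tpermK.
Qed.

Definition swap_bounded (G : {set T} -> R) j U c :=
  {in draws j U, forall A, {in U &, forall x y, `|G A - G (tperm x y @: A)| <= c}}.

Lemma swap_bounded_setU1 {G : {set T} -> R} {j U c a} : a \in U ->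
  swap_bounded G j.+1 U c -> swap_bounded (fun B => G (a |: B)) j (U :\ a) c.
Proof.
move=> aU Gc B Bd x y; rewrite !inE => /andP[xa xU] /andP[ya yU] /=.
have -> : a |: tperm x y @: B = tperm x y @: (a |: B) by rewrite imsetU1 tpermD.
exact: Gc (setU1_draws aU Bd) x y xU yU.
Qed.

Lemma avg_swap_close (G : {set T} -> R) j U c a a' : a \in U -> a' \in U ->
  swap_bounded G j.+1 U c -> 0 <= c ->
  `|avg (draws j (U :\ a)) (fun B => G (a |: B)) -
    avg (draws j (U :\ a')) (fun B => G (a' |: B))| <= c.
Proof.
move=> aU a'U Gc c0; rewrite (@avg_draws_tperm j U a a') // -avgB.
apply: le_trans (ler_norm_avg _ _) _; apply: avg_le_ub => // B Bd /=.
have -> : a' |: tperm a a' @: B = tperm a a' @: (a |: B) by rewrite imsetU1 tpermL.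
exact: Gc (setU1_draws aU Bd) a a' aU a'U.
Qed.
End Swaps.

Section Concentration.
Context {R : realType} {T : finType}.
Implicit Types (U A : {set T}) (G : {set T} -> R).

Lemma avg_draws0 U G : avg (draws 0 U) G = G set0.
Proof. by rewrite draws0 /avg big_set1 cards1 divr1. Qed.

Lemma draws_sub_avg_le {j U G c} : 0 <= c -> swap_bounded G j U c ->
  {in draws j U, forall A, G A - avg (draws j U) G <= j%:R * c}.
Proof.
elim: j U G => [|j IHj] U G c0 Gc A.
  by rewrite avg_draws0 draws0 => /set1P ->; rewrite subrr mul0r.
move=> Ad; have /andP[/subsetP AU /eqP cA] : (A \subset U) && (#|A| == j.+1).
  by move: Ad; rewrite inE.
have [a aA] : exists a, a \in A by apply/card_gt0P; rewrite cA.
have aU := AU a aA.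
set ga := fun a => avg (draws j (U :\ a)) (fun B => G (a |: B)).
have ga_close : `|ga a - avg U ga| <= c.
  apply: (ler_dist_avg _ _ _ _ _ _ aU); first by apply/card_gt0P; exists a.
  by move=> b b' bU b'U; exact: avg_swap_close.
have IH := IHj _ _ c0 (swap_bounded_setU1 aU Gc) _ (setD1_draws Ad aA).
rewrite avg_draws_pick -(setD1K aA) -natr1 mulrDl mul1r.
rewrite -[X in X - _](subrK (ga a)) -addrA lerD //.
exact: le_trans (ler_norm _) ga_close.
Qed.

Lemma draws_mgf_le {j U G c lam} : 0 <= c -> 0 <= lam -> lam * c <= 1/2 ->
  swap_bounded G j U c ->
  avg (draws j U) (fun A => expR (lam * (G A - avg (draws j U) G)))
    <= expR (j%:R * (lam ^+ 2 * c ^+ 2)).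
Proof.
move=> c0 lam0 lamc; elim: j U G => [|j IHj] U G Gc.
  by rewrite !avg_draws0 subrr mulr0 mul0r.
case: (posnP #|U|) => [U0|Ugt0].
  by rewrite avg_draws_pick /avg U0 invr0 mulr0 expR_ge0.
set ga := fun a => avg (draws j (U :\ a)) (fun B => G (a |: B)).
rewrite [avg _ G]avg_draws_pick avg_draws_pick -/ga.
apply: (le_trans (ler_avg _ _
  (fun a => expR (j%:R * (lam ^+ 2 * c ^+ 2)) * expR (lam * (ga a - avg U ga))) _)).
  move=> a aU /=.
  have -> : (fun B => expR (lam * (G (a |: B) - avg U ga))) =
      (fun B => expR (lam * (G (a |: B) - ga a)) * expR (lam * (ga a - avg U ga))).
    by apply: funext => B; rewrite -expRD -mulrDr addrA subrK.
  by rewrite avgMr ler_wpM2r ?expR_ge0 //; apply: IHj; exact: swap_bounded_setU1.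
rewrite avgMl -natr1 mulrDl mul1r expRD ler_wpM2l ?expR_ge0 //.
apply: avg_expR_centered_le => // a a' aU a'U; exact: avg_swap_close.
Qed.
End Concentration.

Section Couplings.
Context {R : realType} {X : eqType}.
Context {d : X -> X -> R}.
Implicit Types (s : seq X) (mu nu : X -> R) (g : X -> X -> R).

Lemma sum_uniq_supp s s' (h : X -> R) : uniq s -> uniq s' -> {subset s <= s'} ->
  (forall p, h p != 0 -> p \in s) -> \sum_(p <- s') h p = \sum_(p <- s) h p.
Proof.
move=> us us' ss' hs; apply: perm_big_supp; apply: uniq_perm; rewrite ?filter_uniq //.
move=> p; rewrite !mem_filter; apply/andP/andP => [[hp _]|[hp ps]]; split => //.
- exact: hs.
- exact: ss'.
Qed.

Lemma sum_seq_pred1 s z (F : X -> R) : uniq s -> z \in s ->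
  \sum_(q <- s) (q == z)%:R * F q = F z.
Proof.
move=> us zs; rewrite (big_rem z zs) /= eqxx mul1r big1_seq ?addr0 // => q /andP[_].
by rewrite mem_rem_uniq // inE => /andP[/negPf-> _]; rewrite mul0r.
Qed.

Lemma coupling_cost_ge0 mu nu s g : (forall x y, 0 <= d x y) -> is_coupling mu nu s g ->
  0 <= coupling_cost d s g.
Proof.
by move=> d0 [_ g0 _ _ _]; do 2![apply: sumr_ge0 => ? _]; apply: mulr_ge0.
Qed.

Lemma coupling_undup_cons x {mu nu s g} : is_coupling mu nu s g ->
  is_coupling mu nu (undup (x :: s)) g /\
  coupling_cost d (undup (x :: s)) g = coupling_cost d s g.
Proof.
case=> us g0 gs grow gcol; set s' := undup _.
have us' : uniq s' := undup_uniq _.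
have ss' : {subset s <= s'} by move=> p ps; rewrite mem_undup inE ps orbT.
have rowP p (h : X -> R) :
    (forall q, h q != 0 -> g p q != 0) -> \sum_(q <- s') h q = \sum_(q <- s) h q.
  by move=> hg; apply: sum_uniq_supp => // q /hg /gs[].
split; first split => //.
- by move=> p q /gs[ps qs]; split; exact: ss'.
- by move=> p; rewrite (rowP p) ?grow.
- by move=> q; rewrite (@sum_uniq_supp s) ?gcol // => p /gs[].
rewrite /coupling_cost (@sum_uniq_supp s) //.
- by apply: eq_bigr => p _; apply: (rowP p) => q /=; rewrite mulf_eq0 negb_or => /andP[].
- move=> p; apply: contraR => ps; rewrite big1_seq // => q _.
  by have [->|/gs[]] := eqVneq (g p q) 0; [rewrite mul0r | rewrite (negPf ps)].
Qed.
End Couplings.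

Section MoveMass.
Context {R : realType} {X : eqType}.
Context {d : X -> X -> R} {mu nu : X -> R} {s : seq X} {g : X -> X -> R} {p0 p1 : X} {e : R}.
Hypotheses (d_tri : forall x y z, d x z <= d x y + d y z) (gc : is_coupling mu nu s g)
  (p1s : p1 \in s) (nu_p0 : 0 < nu p0) (e0 : 0 <= e) (e_le : e <= nu p0).

(* Every row sends the same fraction [e / nu p0] of its mass at [p0] to [p1]. *)
Let r p := e / nu p0 * g p p0.

Let g0 p q : 0 <= g p q. Proof. by case: gc. Qed.

Let r_ge0 p : 0 <= r p.
Proof. by rewrite /r mulr_ge0 ?divr_ge0 ?(ltW nu_p0). Qed.

Let r_le p : r p <= g p p0.
Proof. by apply: ler_piMl => //; rewrite ler_pdivrMr ?mul1r. Qed.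

Let r_supp p : r p != 0 -> p \in s.
Proof. by case: gc => _ _ gs _ _; rewrite /r mulf_eq0 negb_or => /andP[_ /gs[]]. Qed.

Let sum_r : \sum_(p <- s) r p = e.
Proof. by case: gc => _ _ _ _ gcol; rewrite /r -big_distrr /= gcol divfK ?gt_eqF. Qed.

Let p0s : p0 \in s.
Proof.
case: gc => _ _ gs _ gcol; have : nu p0 != 0 by rewrite gt_eqF.
rewrite -gcol; apply: contraR => p0ns; rewrite big1_seq // => p _.
by apply/eqP; apply: contraR p0ns => /gs[].
Qed.

Lemma coupling_move_mass : exists g',
  is_coupling mu (fun q => nu q + e * ((q == p1)%:R - (q == p0)%:R)) s g' /\
  coupling_cost d s g' <= coupling_cost d s g + e * d p0 p1.
Proof.
case: (gc) => us _ gs grow gcol.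
have sum_pred1' z (F : X -> R) := @sum_seq_pred1 _ _ s z F us.
have sum_eq1 z : z \in s -> \sum_(q <- s) (q == z)%:R = 1 :> R.
  by move=> zs; have := sum_pred1' z (fun=> 1) zs; under eq_bigr do rewrite mulr1.
exists (fun p q => g p q + r p * ((q == p1)%:R - (q == p0)%:R)); split; first split => //.
- move=> p q; have := g0 p q; have := r_le p; have := r_ge0 p.
  by case: eqP => [->|_]; case: eqP => [->|_] /=; rewrite ?mulr1n ?mulr0n; nra.
- move=> p q; have [gpq0 | /gs gs_pq _] := eqVneq (g p q) 0; last exact: gs_pq.
  rewrite gpq0 add0r mulf_eq0 negb_or => /andP[/r_supp ps nz]; split => //; move: nz.
  by have [-> //|_] := eqVneq q p1; have [-> //|_] := eqVneq q p0; rewrite subrr eqxx.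
- move=> p; rewrite big_split /= -big_distrr /= sumrB.
  by rewrite !sum_eq1 ?p0s // subrr mulr0 addr0 grow.
- by move=> q; rewrite big_split /= -big_distrl /= sum_r gcol.
have row_cost p : \sum_(q <- s) (g p q + r p * ((q == p1)%:R - (q == p0)%:R)) * d p q =
    \sum_(q <- s) g p q * d p q + r p * (d p p1 - d p p0).
  under eq_bigr do rewrite mulrDl -mulrA mulrBl.
  by rewrite big_split /= -big_distrr /= sumrB !sum_pred1' ?p0s.
rewrite /coupling_cost (eq_bigr _ (fun p _ => row_cost p)) big_split /= lerD2l.
rewrite -sum_r big_distrl /=; apply: ler_sum => p _.
by rewrite ler_wpM2l // lerBlDr addrC.
Qed.
End MoveMass.

Section Wasserstein.
Context {R : realType} {X : eqType}.
Context {d : X -> X -> R}.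
Hypotheses (d_ge0 : forall x y, 0 <= d x y) (d_tri : forall x y z, d x z <= d x y + d y z)
  (d_le1 : forall x y, d x y <= 1).
Implicit Types (mu nu : X -> R).

Lemma W1_le_add mu nu nu' e : 0 <= e ->
  (forall s g, is_coupling mu nu s g -> exists s' g',
     is_coupling mu nu' s' g' /\ coupling_cost d s' g' <= coupling_cost d s g + e) ->
  (forall s g, is_coupling mu nu' s g -> exists s' g', is_coupling mu nu s' g') ->
  W1 d mu nu' <= W1 d mu nu + e.
Proof.
move=> e0 fwd bwd; rewrite /W1.
have [[s0 [g0 gc0]] | nocoupling] := pselect (exists s g, is_coupling mu nu s g).
  have lb' : has_lbound
      [set c | exists s g, is_coupling mu nu' s g /\ c = coupling_cost d s g]%classic.
    by exists 0 => _ [s [g [gc ->]]]; exact: coupling_cost_ge0 gc.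
  rewrite -lerBlDr; apply: lb_le_inf; first by exists (coupling_cost d s0 g0), s0, g0.
  move=> _ [s [g [gc ->]]]; have [s' [g' [gc' le']]] := fwd s g gc.
  rewrite lerBlDr; apply: le_trans le'; apply: (ge_inf lb').
  by exists s', g'.
suff -> : [set c | exists s g, is_coupling mu nu' s g /\ c = coupling_cost d s g]%classic =
          [set c | exists s g, is_coupling mu nu s g /\ c = coupling_cost d s g]%classic.
  by rewrite lerDl.
apply/seteqP; split => c [s [g [gc _]]]; exfalso; apply: nocoupling.
- by have [s' [g' gc']] := bwd s g gc; exists s', g'.
- by exists s, g.
Qed.

Lemma phiE n (f : 'I_n -> X) S q : phi (R := R) n f S q = avg S (fun i => (f i == q)%:R).
Proof. by rewrite /phi natr_card_sep. Qed.

Lemma phi_setU1D1 n (f : 'I_n -> X) (S : {set 'I_n}) x y : x \in S -> y \notin S ->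
  phi (R := R) n f (y |: (S :\ x)) =
  (fun q => phi n f S q + #|S|%:R^-1 * ((q == f y)%:R - (q == f x)%:R)).
Proof.
move=> xS yS; apply: funext => q; rewrite !phiE /avg.
have ySx : y \notin S :\ x by rewrite inE (negPf yS) andbF.
rewrite big_setU1 //= [in RHS](big_setD1 x xS) /= cardsU1 ySx [#|S|](cardsD1 x S) xS /=.
by rewrite !(eq_sym q); ring.
Qed.

Lemma coupling_phi_setU1D1 {n} {f : 'I_n -> X} {S : {set 'I_n}} {x y mu s g} :
  x \in S -> y \notin S -> is_coupling mu (phi n f S) s g -> exists s' g',
    is_coupling mu (phi n f (y |: (S :\ x))) s' g' /\
    coupling_cost d s' g' <= coupling_cost d s g + #|S|%:R^-1.
Proof.
move=> xS yS gc; have [gc' <-] := coupling_undup_cons (d := d) (f y) gc.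
have fy_s : f y \in undup (f y :: s) by rewrite mem_undup mem_head.
have S_gt0 : (0 < #|S|)%N by apply/card_gt0P; exists x.
have phi_fx : #|S|%:R^-1 <= phi (R := R) n f S (f x).
  rewrite phiE /avg ler_pdivlMr ?ltr0n // mulVf ?pnatr_eq0 -?lt0n //.
  by rewrite (bigD1 x) //= eqxx lerDl sumr_ge0.
have e_gt0 : 0 < #|S|%:R^-1 :> R by rewrite invr_gt0 ltr0n.
have [g' [gc'' cost']] :=
  coupling_move_mass d_tri gc' fy_s (lt_le_trans e_gt0 phi_fx) (ltW e_gt0) phi_fx.
exists (undup (f y :: s)), g'; rewrite phi_setU1D1 //; split => //.
apply: le_trans cost' _; rewrite lerD2l ler_piMr ?invr_ge0 //.
Qed.

Lemma W1_setU1D1_le {n} (f : 'I_n -> X) {S : {set 'I_n}} {x y} mu :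
  x \in S -> y \notin S ->
  W1 d mu (phi n f (y |: (S :\ x))) <= W1 d mu (phi n f S) + #|S|%:R^-1.
Proof.
move=> xS yS; apply: W1_le_add; first by rewrite invr_ge0.
  by move=> s g; exact: coupling_phi_setU1D1.
have yS' : y \in y |: (S :\ x) by rewrite setU11.
have xS' : x \notin y |: (S :\ x).
  by rewrite !inE eqxx orbF; apply: contra yS => /eqP <-.
move=> s g /(coupling_phi_setU1D1 yS' xS') [s' [g' [gc _]]]; exists s', g'.
by rewrite setU1K ?setD1K // in gc; rewrite inE (negPf yS) andbF.
Qed.

Lemma W1_swap_bounded {n} (f : 'I_n -> X) mu k :
  swap_bounded (fun S => W1 d mu (phi n f S)) k [set: 'I_n] k%:R^-1.
Proof.
move=> A; rewrite inE => /andP[_ /eqP cA] x y _ _ /=.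
have swap_le u v : u \in A -> v \notin A ->
    `|W1 d mu (phi n f A) - W1 d mu (phi n f (v |: (A :\ u)))| <= k%:R^-1.
  move=> uA vA; set A' := v |: (A :\ u).
  have vA' : v \in A' by rewrite setU11.
  have uA' : u \notin A' by rewrite !inE eqxx orbF; apply: contra vA => /eqP <-.
  have cA' : #|A'| = k by rewrite cardsU1 inE (negPf vA) andbF -cA (cardsD1 u A) uA.
  have := W1_setU1D1_le f mu vA' uA'.
  rewrite setU1K ?setD1K // ?inE ?(negPf vA) ?andbF // cA'.
  by have := W1_setU1D1_le f mu uA vA; rewrite -/A' cA ler_norml => *; apply/andP; split; lra.
have [xA|xA] := boolP (x \in A); have [yA|yA] := boolP (y \in A).
- by rewrite imset_tperm_id ?xA ?yA // subrr normr0 invr_ge0.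
- by rewrite imset_tperm_out //; exact: swap_le.
- by rewrite tpermC imset_tperm_out //; exact: swap_le.
- by rewrite imset_tperm_id ?(negPf xA) ?(negPf yA) // subrr normr0 invr_ge0.
Qed.
End Wasserstein.

Theorem lemma2p4 (R : realType) (X : eqType) (d : X -> X -> R)
  (d_ge0 : forall x y, 0 <= d x y)
  (d_eq0 : forall x y, d x y = 0 <-> x = y)
  (d_sym : forall x y, d x y = d y x)
  (d_tri : forall x y z, d x z <= d x y + d y z)
  (d_le1 : forall x y, d x y <= 1)
  (n k : nat) (f : 'I_n -> X) (hk1 : (1 <= k)%N) (hkn : (k <= n)%N)
  (t : R) (ht : 0 < t) :
  let Wf := fun S : {set 'I_n} => W1 d (phi n f [set: 'I_n]) (phi n f S) in
  let mu := unifE n k Wf in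
  unifP n k (fun S => mu + t <= Wf S) <= expR (- (t ^+ 2 * k%:R / 4)).
Proof.
cbv zeta; set Wf := fun S : {set 'I_n} => W1 _ _ _; set mu := unifE n k Wf.
have ksubsetsE : ksubsets n k = draws k [set: 'I_n].
  by apply/setP => S; rewrite !inE subsetT.
have muE : mu = avg (draws k [set: 'I_n]) Wf by rewrite /mu /unifE ksubsetsE.
have -> : unifP (R := R) n k (fun S => mu + t <= Wf S) =
    avg (draws k [set: 'I_n]) (fun S => (mu + t <= Wf S)%R%:R).
  by rewrite /unifP natr_card_sep ksubsetsE.
have Wc : swap_bounded Wf k [set: 'I_n] k%:R^-1 := W1_swap_bounded d_ge0 d_tri d_le1 f _ k.
have k_gt0 : 0 < k%:R :> R by rewrite ltr0n.
have c0 : 0 <= k%:R^-1 :> R by rewrite invr_ge0 ltW.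
have [t_le1 | t_gt1] := lerP t 1.
  pose lam := k%:R * t / 2.
  have lam0 : 0 <= lam by rewrite divr_ge0 ?mulr_ge0 ?ltW.
  have lamc : lam * k%:R^-1 <= 1 / 2.
    by rewrite (_ : lam * _ = t / 2); [lra | rewrite /lam; field; rewrite gt_eqF].
  apply: le_trans (avg_chernoff lam0) _; rewrite muE.
  apply: le_trans (ler_wpM2r (expR_ge0 _) (draws_mgf_le c0 lam0 lamc Wc)) _.
  rewrite -expRD ler_expR (_ : _ + _ = - (t ^+ 2 * k%:R / 4)) //.
  by rewrite /lam; field; rewrite gt_eqF.
apply: le_trans (expR_ge0 _); apply: avg_le_ub => // S Sd.
have := draws_sub_avg_le c0 Wc _ Sd; rewrite -muE divff ?gt_eqF //.
by have [|//] := leP (mu + t) (Wf S); lra.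
Qed.
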